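(* Let $P$ be a finite poset and let $P_{\chi} \subseteq P$ be a $\chi$-minimal model of $P$. If $h, h' : P \to \mathbb{Z}$ are functions whose restrictions to $P_{\chi}$ coincide, $h|_{P_\chi} = h'|_{P_\chi}$, then \[ \int_{P} h \, d\chi = \int_{P} h' \, d\chi . \]
   Context: For a finite poset $P$, the zeta function is the $P \times P$ matrix with $\zeta(x,y)=1$ if $x \le y$ and $0$ otherwise; it is invertible, and the Euler characteristic of $P$ is $\chi(P) = \sum_{x,y \in P} \zeta^{-1}(x,y)$ ($\chi(\emptyset)=0$). A filter of $P$ is an upward-closed subset. For a subset $Q$, $\delta_Q$ denotes its indicator function. Every $f : P \to \mathbb{Z}$ can be written as $f = \sum_i a_i \delta_{Q_i}$ with $a_i \in \mathbb{Z}$ and $Q_i$ filters; the Euler calculus of $f$ is $\int_P f\, d\chi = \sum_i a_i \chi(Q_i)$, independent of the representation. A point $x$ of a finite poset $R$ is a $\chi$-point of $R$ if $\chi(R_{>x}) = 1$, where $R_{>x} = \{y \in R \mid y > x\}$. A $\chi$-minimal model of $P$ is a subposet (with the induced order) obtained from $P$ by repeatedly removing one point that is a $\chi$-point of the current subposet, until the current subposet has no $\chi$-points. *)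

From HB Require Import structures.
From mathcomp Require Import all_boot all_order all_algebra.
From Stdlib Require Import ClassicalEpsilon.
Set Implicit Arguments. Unset Strict Implicit. Unset Printing Implicit Defensive.
Import Order.TTheory GRing.Theory.
Local Open Scope ring_scope.

Section PosetDefs.
Context {d : Order.disp_t} {T : finPOrderType d}.

Definition zeta_mx (Q : {set T}) : 'M[int]_#|Q| :=
  \matrix_(i, j) ((@enum_val T (mem Q) i <= @enum_val T (mem Q) j)%O)%:R.

(* Euler characteristic: sum of all entries of zeta^{-1}; chi(set0) = 0. *)
Definition echi (Q : {set T}) : int :=
  \sum_(i < #|Q|) \sum_(j < #|Q|) (invmx (zeta_mx Q)) i j.

Definition is_filter (Q : {set T}) : Prop :=
  forall x y : T, x \in Q -> (x <= y)%O -> y \in Q.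

(* r = [:: (a_1,Q_1); ...] represents f as sum_i a_i delta_{Q_i}, Q_i filters. *)
Definition filter_rep (f : T -> int) (r : seq (int * {set T})) : Prop :=
  (forall p, p \in r -> is_filter p.2) /\
  forall x : T, f x = \sum_(p <- r) p.1 * (x \in p.2)%:R.

Definition euler_integral (f : T -> int) : int :=
  \sum_(p <- epsilon (inhabits [::]) (filter_rep f)) p.1 * echi p.2.

Definition above (R : {set T}) (x : T) : {set T} := [set y in R | (x < y)%O].

Definition chi_point (R : {set T}) (x : T) : Prop := x \in R /\ echi (above R x) = 1.

Inductive chi_reduces : {set T} -> {set T} -> Prop :=
| chi_red_refl R : chi_reduces R R
| chi_red_step R x S : chi_point R x -> chi_reduces (R :\ x) S -> chi_reduces R S.

Definition chi_minimal_model (S : {set T}) : Prop :=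
  chi_reduces [set: T] S /\ forall x, ~ chi_point S x.

End PosetDefs.

From HB Require Import structures.
From mathcomp Require Import all_boot all_order all_algebra.
From Stdlib Require Import ClassicalEpsilon.
Set Implicit Arguments. Unset Strict Implicit. Unset Printing Implicit Defensive.
Import Order.TTheory GRing.Theory.
Local Open Scope ring_scope.

(* Call u a chi-weight on Q when sum_{y in Q, y >= x} u y = 1 for all x in Q,
   i.e. zeta u = 1.  Then chi(Q) = sum_Q u, and a chi-weight on P restricts to
   one on every filter, so the Euler integral of f is sum_x f x * u x.  If x is
   a chi-point of R, the equation at x reads u x + chi(R_{>x}) = 1, so u x = 0
   and u is still a chi-weight on R minus x.  Hence u vanishes outside a
   chi-minimal model, and the integral only sees the values of f there. *)

Section ChiWeight.
Context {d : Order.disp_t} {T : finPOrderType d}.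

Lemma exists_minimal_in (Q : {set T}) x0 : x0 \in Q ->
  exists2 m, m \in Q & forall y, y \in Q -> (y <= m)%O -> y = m.
Proof.
move=> x0Q.
case: (arg_minnP (fun x => #|[set y in Q | (y < x)%O]|) x0Q) => m mQ mmin.
exists m => // y yQ lym; apply/eqP; apply: contraT => neq_ym.
have lt_ym : (y < m)%O by rewrite lt_neqAle neq_ym lym.
suff : (#|[set z in Q | (z < y)%O]| < #|[set z in Q | (z < m)%O]|)%N
  by rewrite ltnNge mmin.
apply/proper_card/properP; split.
  apply/subsetP => z; rewrite !inE => /andP[-> /= lt_zy]; exact: lt_trans lt_zy lt_ym.
by exists y; rewrite !inE ?yQ ?lt_ym ?ltxx.
Qed.

Lemma upper_sums_surjective (Q : {set T}) (g : T -> int) :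
  exists u : T -> int, forall x, x \in Q -> \sum_(y in Q | (x <= y)%O) u y = g x.
Proof.
move: {2}#|Q| (erefl #|Q|) => n; elim: n Q => [|n IH] Q cardQ.
  by exists (fun _ => 0) => x xQ; move: cardQ; rewrite (cardD1 x) xQ.
have [x0 x0Q] : exists x, x \in Q by apply/card_gt0P; rewrite cardQ.
have [m mQ m_min] := exists_minimal_in x0Q.
have [u' hu'] : exists u' : T -> int, forall x, x \in Q :\ m ->
    \sum_(y in Q :\ m | (x <= y)%O) u' y = g x.
  by apply: IH; move: cardQ; rewrite (cardsD1 m) mQ => -[].
pose um := g m - \sum_(z in Q :\ m | (m <= z)%O) u' z.
exists (fun y => if y == m then um else u' y) => x xQ.
have sum_u' P : \sum_(y in Q :\ m | P y) (if y == m then um else u' y) =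
    \sum_(y in Q :\ m | P y) u' y.
  by apply: eq_bigr => y; rewrite !inE => /andP[/andP[/negbTE-> _] _].
have split_m P : \sum_(y in Q | P y) (if y == m then um else u' y) =
    (if P m then um else 0) + \sum_(y in Q :\ m | P y) u' y.
  by rewrite big_mkcondr (big_setD1 m mQ) -big_mkcondr sum_u' eqxx.
case: (eqVneq x m) => [->|neq_xm].
  by rewrite split_m le_refl subrK.
have not_le_xm : ~~ (x <= m)%O by apply: contra neq_xm => /(m_min x xQ) ->.
by rewrite split_m (negbTE not_le_xm) add0r hu' // !inE neq_xm.
Qed.

Definition chi_weight (Q : {set T}) (u : T -> int) : Prop :=
  forall x, x \in Q -> \sum_(y in Q | (x <= y)%O) u y = 1.

Lemma exists_chi_weight (Q : {set T}) : exists u, chi_weight Q u.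
Proof. exact: upper_sums_surjective. Qed.

Lemma zeta_mulmxE (Q : {set T}) n (F : 'I_n -> T -> int) i j :
  (zeta_mx Q *m \matrix_(k, l) F l (enum_val k)) i j =
  \sum_(y in Q | (enum_val i <= y)%O) F j y.
Proof.
rewrite !mxE [RHS]big_mkcondr [RHS]big_enum_val.
by apply: eq_bigr => k _; rewrite !mxE; case: ifP; rewrite ?mul1r ?mul0r.
Qed.

Lemma zeta_mx_unit (Q : {set T}) : zeta_mx Q \in unitmx.
Proof.
have basis j : exists u : T -> int, forall x, x \in Q ->
    \sum_(y in Q | (x <= y)%O) u y = (x == @enum_val _ (mem Q) j)%:R.
  exact: upper_sums_surjective.
have [F hF] := choice _ basis.
suff /mulmx1_unit[] : zeta_mx Q *m \matrix_(k, l) F l (enum_val k) = 1%:M by [].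
apply/matrixP => i j; rewrite zeta_mulmxE hF ?enum_valP //.
by rewrite (inj_eq enum_val_inj) mxE.
Qed.

Lemma echi_chi_weight (Q : {set T}) u : chi_weight Q u -> echi Q = \sum_(x in Q) u x.
Proof.
move=> hu; pose U : 'cV[int]_#|Q| := \matrix_(k, l) (fun _ => u) l (enum_val k).
have zetaU : zeta_mx Q *m U = const_mx 1.
  by apply/matrixP => i j; rewrite zeta_mulmxE hu ?enum_valP ?mxE.
have invU : invmx (zeta_mx Q) *m const_mx 1 = U by rewrite -zetaU mulKmx ?zeta_mx_unit.
rewrite /echi [RHS]big_enum_val; apply: eq_bigr => i _.
have := congr1 (fun M : 'cV[int]_#|Q| => M i 0) invU; rewrite !mxE => <-.
by apply: eq_bigr => j _; rewrite mxE mulr1.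
Qed.

Lemma chi_weight_upper_subset (R Q : {set T}) u : chi_weight R u -> Q \subset R ->
  (forall x y, x \in Q -> y \in R -> (x <= y)%O -> y \in Q) -> chi_weight Q u.
Proof.
move=> hu sQR upQ x xQ; rewrite -(hu x (subsetP sQR x xQ)).
apply: eq_bigl => y; case le_xy: (x <= y)%O; rewrite ?andbF ?andbT //.
by apply/idP/idP => [/(subsetP sQR) //|yR]; exact: upQ xQ yR le_xy.
Qed.

Lemma chi_weight_chi_point (R : {set T}) x u :
  chi_weight R u -> chi_point R x -> u x = 0.
Proof.
move=> hu [xR chi_above].
have hu_above : chi_weight (above R x) u.
  apply: (chi_weight_upper_subset hu).
    by apply/subsetP => y; rewrite inE => /andP[].
  by move=> y z; rewrite !inE => /andP[_ lt_xy] -> /=; exact: lt_le_trans.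
have := hu x xR; rewrite (bigD1 x) /= ?xR ?le_refl //.
suff -> : \sum_(y | (y \in R) && (x <= y)%O && (y != x)) u y = 1.
  by move/(canRL (addrK 1)); rewrite subrr.
rewrite -chi_above (echi_chi_weight hu_above); apply: eq_bigl => y.
by rewrite inE lt_def andbAC andbA.
Qed.

Lemma chi_weight_setD1 (R : {set T}) x u :
  chi_weight R u -> u x = 0 -> chi_weight (R :\ x) u.
Proof.
move=> hu ux0 y; rewrite inE => /andP[_ yR]; rewrite -(hu y yR).
rewrite [RHS](bigID (pred1 x)) /= [X in _ = X + _]big1 ?add0r => [|z /andP[_ /eqP->] //].
by apply: eq_bigl => z; rewrite !inE -andbA andbC.
Qed.

Lemma chi_reduces_weight0 (R S : {set T}) u : chi_reduces R S -> chi_weight R u ->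
  forall x, x \in R -> x \notin S -> u x = 0.
Proof.
move=> red; elim: red u => [R' | R' x S' chi_x _ IH] u hu y yR.
  by rewrite yR.
have ux0 := chi_weight_chi_point hu chi_x.
case: (eqVneq y x) => [-> //|neq_yx].
by apply: IH (chi_weight_setD1 hu ux0) _ _; rewrite !inE neq_yx.
Qed.

Lemma echi_filter (Q : {set T}) u : chi_weight [set: T] u -> is_filter Q ->
  echi Q = \sum_x (x \in Q)%:R * u x.
Proof.
move=> hu filterQ; rewrite (@echi_chi_weight _ u); last first.
  by apply: (chi_weight_upper_subset hu (subsetT Q)) => x y xQ _; apply: filterQ.
by rewrite big_mkcond; apply: eq_bigr => x _; case: (x \in Q); rewrite ?mul1r ?mul0r.
Qed.

Lemma filter_rep_exists (f : T -> int) : exists r, filter_rep f r.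
Proof.
exists ([seq (f x, [set y | (x <= y)%O]) | x <- enum T] ++
        [seq (- f x, [set y | (x < y)%O]) | x <- enum T]); split.
  move=> p; rewrite mem_cat => /orP[] /mapP[x _ ->] y z /=; rewrite !inE.
    exact: le_trans.
  exact: lt_le_trans.
move=> z; rewrite big_cat !big_map /= -big_split -enumT big_enum /= (bigD1 z) //=.
rewrite big1 => [|x neq_xz]; first by rewrite !inE le_refl ltxx mulr1 mulr0 !addr0.
by rewrite !inE lt_def eq_sym neq_xz mulNr addrN.
Qed.

Lemma sum_filter_rep (f : T -> int) r u : chi_weight [set: T] u -> filter_rep f r ->
  \sum_(p <- r) p.1 * echi p.2 = \sum_x f x * u x.
Proof.
move=> hu [filter_r f_r].
rewrite (eq_big_seq (fun p : int * {set T} => \sum_x p.1 * (x \in p.2)%:R * u x)).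
  by rewrite exchange_big; apply: eq_bigr => x _; rewrite f_r mulr_suml.
move=> p pr; rewrite (echi_filter hu (filter_r p pr)) mulr_sumr.
by apply: eq_bigr => x _; rewrite mulrA.
Qed.

Lemma euler_integral_chi_weight (f : T -> int) u : chi_weight [set: T] u ->
  euler_integral f = \sum_x f x * u x.
Proof.
move=> hu; have [r rep_r] := filter_rep_exists f.
exact: sum_filter_rep hu (epsilon_spec (inhabits [::]) _ (ex_intro _ r rep_r)).
Qed.

End ChiWeight.

Theorem corollary4p2 (d : Order.disp_t) (T : finPOrderType d)
  (Pchi : {set T}) (h h' : T -> int) :
  chi_minimal_model Pchi ->
  (forall x, x \in Pchi -> h x = h' x) ->
  euler_integral h = euler_integral h'.
Proof.
move=> [reduces_Pchi _] eq_hh'.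
have [u hu] := exists_chi_weight [set: T].
rewrite !(euler_integral_chi_weight _ hu); apply: eq_bigr => x _.
have [xP|xNP] := boolP (x \in Pchi); first by rewrite eq_hh'.
by rewrite (chi_reduces_weight0 reduces_Pchi hu) ?mulr0 ?inE.
Qed.
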